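(* Let $I=[0,1]$ with Lebesgue measure and let $W$ be a graphon on $I$. Let $\gamma:I\to I$ be a measure-preserving transformation satisfying $W(\gamma(x),\gamma(y))=W(x,y)$. Then $\gamma$ acts on $\mathcal M^I$ by $\mu\mapsto\mu\circ\gamma$ (that is, $x\mapsto\mu(\gamma(x))$), this map sends $\mathcal M^I$ into $\mathcal M^I$, and it is a symmetry of the mean-field graphon system: it maps solutions of the mean-field graphon system to solutions.
   Context: Let $\mathbb T=\mathbb{R}/\mathbb{Z}$, $\mathcal M$ the set of Borel probability measures on $\mathbb T$, and $\mathcal M^I$ the set of maps $I\to\mathcal M$ such that preimages of open sets are measurable. Given a continuous $t\mapsto\mu(\cdot,t)\in\mathcal M^I$ and $x\in I$, let $\Phi(\mu,x,t,\cdot):\mathbb T\to\mathbb T$ be the flow of $\dot u(t)=\int_I W(x,y)\int_{\mathbb T}\sin(v-u(t))\,d\mu(y,t)(v)\,dy$. The mean-field graphon system is $\mu(x,t)=\Phi(\mu,x,t,\cdot)\#\mu(x,0)$, $\mu(x,0)=\mu_0(x)$ with $\mu_0\in\mathcal M^I$, required for every $t\in\mathbb{R}$ and almost every $x\in I$; $\#$ denotes push-forward of measures. *)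

From HB Require Import structures.
From mathcomp Require Import all_boot all_order all_algebra.
From mathcomp Require Import all_classical all_reals all_analysis.
Set Implicit Arguments. Unset Strict Implicit. Unset Printing Implicit Defensive.
Import Order.TTheory GRing.Theory Num.Theory.
Import numFieldNormedType.Exports.
Local Open Scope classical_set_scope.
Local Open Scope ring_scope.

Section MFG.
Variable R : realType.

(* The interval I = [0,1] as a subset of R (Lebesgue measure = lebesgue_measure
   restricted to it; measurable = Borel measurable). *)
Definition Iset : set R := `[0, 1]%classic.

(* The circle T is represented by the fundamental domain [0, 2*pi) of R. *)
Definition period : R := 2 * pi.
Definition Tset : set R := `[0, period[%classic.
Definition modT (z : R) : R := z - period * (Num.floor (z / period))%:~R.

(* Points of M: Borel probability measures on T, i.e. probability measures
   on R concentrated on the fundamental domain. *)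
Definition Meas := probability R R.
Definition onT (P : Meas) : Prop := P (~` Tset) = 0%E.

(* continuous functions on T = continuous period-periodic functions on R *)
Definition contT (f : R -> R) : Prop :=
  continuous f /\ forall z, f (z + period) = f z.

Definition weak_open (S : set Meas) : Prop :=
  forall P, onT P -> S P ->
    exists (fs : seq (R -> R)) (eps : R), 0 < eps /\ (forall f, f \in fs -> contT f) /\
      forall Q, onT Q ->
        (forall f, f \in fs ->
           `| Rintegral Q setT f - Rintegral P setT f | < eps) -> S Q.

Definition in_MI (mu : R -> Meas) : Prop :=
  (forall x, Iset x -> onT (mu x)) /\
  forall S, weak_open S -> measurable (Iset `&` mu @^-1` S).

Definition graphon (W : R -> R -> R) : Prop :=
  measurable_fun (Iset `*` Iset) (fun p : R * R => W p.1 p.2) /\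
  (forall x y, Iset x -> Iset y -> W x y = W y x) /\
  (forall x y, Iset x -> Iset y -> 0 <= W x y <= 1).

Definition measure_preserving (g : R -> R) : Prop :=
  (forall x, Iset x -> Iset (g x)) /\
  measurable_fun Iset g /\
  forall A, measurable A -> A `<=` Iset ->
    lebesgue_measure (Iset `&` g @^-1` A) = lebesgue_measure A.

Definition vfield (W : R -> R -> R) (mu : R -> R -> Meas) (x t u : R) : R :=
  Rintegral lebesgue_measure Iset
    (fun y => W x y * Rintegral (mu y t) setT (fun v => sin (v - u))).

Definition is_traj (W : R -> R -> R) (mu : R -> R -> Meas) (x u0 : R) (u : R -> R) : Prop :=
  u 0 = u0 /\ forall t : R, is_derive t (1 : R) u (vfield W mu x t (u t)).

(* Phi(mu, x, t, u0) = z (on the lift R of T):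
   the solution starting at u0 exists and every such solution has value z at t *)
Definition flow_at (W : R -> R -> R) (mu : R -> R -> Meas) (x t u0 : R) (z : R) : Prop :=
  (exists u, is_traj W mu x u0 u) /\ forall u, is_traj W mu x u0 u -> u t = z.

Definition weak_cont (mu : R -> R -> Meas) : Prop :=
  forall x, Iset x -> forall f, contT f ->
    continuous (fun t => Rintegral (mu x t) setT f).

Definition mfg_solution (W : R -> R -> R) (mu0 : R -> Meas) (mu : R -> R -> Meas) : Prop :=
  in_MI mu0 /\
  (forall t, in_MI (fun x => mu x t)) /\
  weak_cont mu /\
  {ae lebesgue_measure, forall x, Iset x -> mu x 0 = mu0 x} /\
  forall t, {ae lebesgue_measure, forall x, Iset x ->
    exists Phi : R -> R,
      (forall u0, flow_at W mu x t u0 (Phi u0)) /\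
      forall A, measurable A ->
        mu x t A = mu0 x ((fun u0 => modT (Phi u0)) @^-1` A)}.

End MFG.

From HB Require Import structures.
From mathcomp Require Import all_boot all_order all_algebra.
From mathcomp Require Import all_classical all_reals all_analysis.
From mathcomp Require Import measurable_realfun.
From mathcomp Require Import ring lra.
Set Implicit Arguments. Unset Strict Implicit. Unset Printing Implicit Defensive.
Import Order.TTheory GRing.Theory Num.Theory.
Import numFieldNormedType.Exports.
Local Open Scope classical_set_scope.
Local Open Scope ring_scope.

(* A measure-preserving map g with W (g x) (g y) = W x y acts pointwise on every
   clause of the definition of a solution except the vector field, which involves
   the integral over y of W x y against mu y.  There invariance of W and the change
   of variables y = g y' show that the vector field of mu \o g at x is the vector
   field of mu at g x, so the characteristic flows, and with them the push-forward
   identity, transfer from g x to x.  Measurability and almost-everywhere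
   statements transfer because g is measurable and pulls null sets back to null
   sets. *)

Section measure_preserving_Iset.
Variable R : realType.
Local Notation I := (@Iset R).

Lemma measurable_Iset : measurable I.
Proof. exact: measurable_itv. Qed.

Lemma Iset2F : ~ I 2.
Proof. by rewrite /Iset /= in_itv /= => /andP[_]; lra. Qed.

(* The push-forward lemmas need a map measurable on all of R; since 2 lies
   outside I, subsets of I have the same preimages under extI g as under g on I. *)
Definition extI (g : R -> R) (x : R) : R := if x \in I then g x else 2.

Lemma extI_in (g : R -> R) (x : R) : I x -> extI g x = g x.
Proof. by move=> Ix; rewrite /extI mem_set. Qed.

Lemma extI_out (g : R -> R) (x : R) : ~ I x -> extI g x = 2.
Proof. by move=> Ix; rewrite /extI memNset. Qed.

Lemma measurable_extI (g : R -> R) :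
  measurable_fun I g -> measurable_fun setT (extI g).
Proof.
move=> mg _ B mB; rewrite setTI.
have -> : extI g @^-1` B = (I `&` g @^-1` B) `|` (~` I `&` [set _ | B 2]).
  by apply/seteqP; split => x /=; case: (pselect (I x)) => Ix;
    [rewrite extI_in | rewrite extI_out | rewrite extI_in | rewrite extI_out];
    tauto.
apply: measurableU; first by apply: mg => //; exact: measurable_Iset.
apply: measurableI; first exact: measurableC measurable_Iset.
by have [B2|B2] := pselect (B 2);
  [rewrite (_ : [set _ | _] = setT) | rewrite (_ : [set _ | _] = set0)];
  rewrite ?predeqE.
Qed.

Lemma extI_preimage (g : R -> R) (A : set R) :
  A `<=` I -> extI g @^-1` A = I `&` g @^-1` A.
Proof.
move=> AI; apply/seteqP; split => x /=; case: (pselect (I x)) => Ix.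
- by rewrite extI_in.
- by rewrite extI_out // => /AI /Iset2F.
- by rewrite extI_in // => -[].
- by case.
Qed.

Variable g : R -> R.
Hypothesis hg : measure_preserving g.

Lemma in_MI_comp (mu : R -> Meas R) : in_MI mu -> in_MI (mu \o g).
Proof.
have [gI [mg _]] := hg; move=> [muT mmu]; split=> [x Ix|S wS].
  exact/muT/gI.
have -> : I `&` (mu \o g) @^-1` S = I `&` g @^-1` (I `&` mu @^-1` S).
  by apply/seteqP; split => x /= [Ix Sx]; do ?split=> //; [exact: gI | case: Sx].
exact: mg measurable_Iset _ (mmu S wS).
Qed.

Lemma measure_preserving_ae (P : R -> Prop) :
  {ae lebesgue_measure, forall x, I x -> P x} ->
  {ae lebesgue_measure, forall x, I x -> P (g x)}.
Proof.
have [gI [mg mp]] := hg; move=> [N [mN N0 sN]].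
have mNI : measurable (N `&` I) := measurableI _ _ mN measurable_Iset.
exists (I `&` g @^-1` (N `&` I)); split.
- exact: mg measurable_Iset _ mNI.
- rewrite mp //.
  by apply/eqP; rewrite eq_le measure_ge0 andbT -N0 le_measure ?inE//; exact: subIsetl.
- move=> x /= nP; have Ix : I x by apply: contrapT => nIx; apply: nP.
  split=> //; split; last exact: gI.
  by apply: sN => PN; apply: nP => _; apply: PN; exact: gI.
Qed.

Lemma ge0_integral_measure_preserving (f : R -> \bar R) :
  measurable_fun (I : set R) f -> (forall x, I x -> (0 <= f x)%E) ->
  (\int[lebesgue_measure]_(x in I) f (g x) = \int[lebesgue_measure]_(x in I) f x)%E.
Proof.
have [gI [mg mp]] := hg; move=> mf f0.
have mext := measurable_extI mg.
have gII : I `&` g @^-1` I = I.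
  by apply/seteqP; split => [x []//|x Ix]; split=> //; exact: gI.
transitivity (\int[lebesgue_measure]_(x in I) (f \o extI g) x)%E.
  by apply: eq_integral => x /[!inE] Ix; rewrite /= extI_in.
have := @ge0_integral_pushforward _ _ (measurableTypeR R) (measurableTypeR R) R
  (extI g) mext lebesgue_measure _ _ measurable_Iset mf.
rewrite extI_preimage // gII => <-; last by move=> y /[!inE]; exact: f0.
pose pm := @measure_function_pushforward__canonical__measure_function_Measure _ _
  (measurableTypeR R) (measurableTypeR R) R lebesgue_measure (extI g) mext.
change ((\int[pm]_(y in I) f y) = (\int[lebesgue_measure]_(x in I) f x))%E.
apply: (eq_measure_integral lebesgue_measure) => A mA AI.
transitivity (lebesgue_measure (extI g @^-1` A)); first by [].
by rewrite extI_preimage //; exact: mp.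
Qed.

Lemma Rintegral_measure_preserving (h : R -> R) : measurable_fun I h ->
  Rintegral lebesgue_measure I (h \o g) = Rintegral lebesgue_measure I h.
Proof.
move=> mh; have {}mh : measurable_fun (I : set R) (fun x => (h x)%:E : \bar R).
  exact/measurable_EFinP.
rewrite /Rintegral integralE [in RHS]integralE.
rewrite -(ge0_integral_measure_preserving (measurable_funepos mh)); last first.
  by move=> x _; exact: funepos_ge0.
rewrite -(ge0_integral_measure_preserving (measurable_funeneg mh)); last first.
  by move=> x _; exact: funeneg_ge0.
by congr (fine (_ - _)); apply: eq_integral => x _; rewrite ?funeposE ?funenegE.
Qed.

End measure_preserving_Iset.

Arguments measurable_Iset {R}.

Section graphon_symmetry.
Variable R : realType.
Local Notation I := (@Iset R).

Lemma contT_sin_sub (u : R) : contT (fun v => sin (v - u)).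
Proof.
split=> [x|z].
  by apply: continuous_comp; [exact: cvgB cvg_id (cvg_cst _)|exact: continuous_sin].
rewrite /period -(sinD2pi (z - u)); congr sin.
by rewrite -mulr_natl; ring.
Qed.

Lemma in_MI_measurable_integral (nu : R -> Meas R) (f : R -> R) :
  in_MI nu -> contT f -> measurable_fun I (fun y => Rintegral (nu y) setT f).
Proof.
move=> [_ mnu] cf.
apply: (measurability _ (RGenOInfty.measurableE R)) => //.
move=> _ [_ [a ->] <-].
have -> : I `&` (fun y => Rintegral (nu y) setT f) @^-1` `]a, +oo[%classic
    = I `&` nu @^-1` [set P | a < Rintegral P setT f].
  by apply/seteqP; split => x /= [Ix]; rewrite in_itv /= andbT.
apply: mnu => P _ aP.
exists [:: f], (Rintegral P setT f - a); split; first by rewrite subr_gt0.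
split=> [f'|Q _ /(_ f (mem_head _ _))]; first by rewrite mem_seq1 => /eqP ->.
by rewrite ltr_norml => /andP[? ?] /=; lra.
Qed.

Lemma graphon_measurable_section (W : R -> R -> R) (c : R) :
  graphon W -> I c -> measurable_fun I (W c).
Proof.
move=> [mW _] Ic.
have := @measurable_comp _ _ _ _ _ _ (I `*` I) (fun p : R * R => W p.1 p.2) I (pair c)
  (measurableX measurable_Iset measurable_Iset) _ mW
  (measurable_funTS (pair1_measurable c)).
apply.
by move=> _ [y Iy <-]; split.
Qed.

Lemma vfield_comp (W : R -> R -> R) (g : R -> R) (mu : R -> R -> Meas R) (x : R) :
  graphon W -> measure_preserving g ->
  (forall x y, I x -> I y -> W (g x) (g y) = W x y) ->
  (forall t, in_MI (fun y => mu y t)) -> I x ->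
  vfield W (fun y => mu (g y)) x = vfield W mu (g x).
Proof.
move=> hW hg Winv muI Ix; apply/funext => t; apply/funext => u.
pose h y := W (g x) y * Rintegral (mu y t) setT (fun v => sin (v - u)).
rewrite /vfield -[RHS](Rintegral_measure_preserving hg (h := h)).
  by apply: eq_Rintegral => y /[!inE] Iy; rewrite /h /= Winv.
apply: measurable_funM; first exact: graphon_measurable_section hW (hg.1 x Ix).
exact: in_MI_measurable_integral (muI t) (contT_sin_sub u).
Qed.

End graphon_symmetry.

Theorem theorem7p2 (R : realType) (W : R -> R -> R) (g : R -> R) :
  graphon W ->
  measure_preserving g ->
  (forall x y, Iset x -> Iset y -> W (g x) (g y) = W x y) ->
  (forall mu : R -> Meas R, in_MI mu -> in_MI (fun x => mu (g x))) /\
  (forall (mu0 : R -> Meas R) (mu : R -> R -> Meas R),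
      mfg_solution W mu0 mu ->
      mfg_solution W (fun x => mu0 (g x)) (fun x t => mu (g x) t)).
Proof.
move=> hW hg Winv; split=> [mu|mu0 mu]; first exact: in_MI_comp.
move=> [mu0I [muI [mu_cont [mu_init mu_flow]]]].
split; first exact: in_MI_comp.
split; first by move=> t; exact: in_MI_comp (muI t).
split; first by move=> x Ix; exact: mu_cont (g x) (hg.1 x Ix).
split; first exact: (measure_preserving_ae hg (P := fun x => mu x 0 = mu0 x)).
move=> t; apply: (@filterS _ _ (ae_filter_ringOfSetsType lebesgue_measure) _ _ _
  (measure_preserving_ae hg (mu_flow t))) => x flow_gx Ix.
have [Phi [PhiP PhiE]] := flow_gx Ix.
exists Phi; split=> // u0.
by rewrite /flow_at /is_traj (vfield_comp hW hg Winv muI Ix); exact: PhiP.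
Qed.
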